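(* For integers $n\ge1$ and $s\ge0$, the number of binary sequences $(b_1,\dots,b_{(s+2)n+1})$ of length $(s+2)n+1$ such that for every $j\ge1$ the $j$th occurrence of the pattern $10$, if it exists, starts at an index $\ge (s+2)j+1$, and such that there are exactly $2n-1$ indices $i$ with $b_i\ne b_{i+1}$, equals \[ \frac{1}{n}\binom{(s+2)n}{2n-1} = 2\binom{(s+2)n-1}{2n-1} - s\binom{(s+2)n-1}{2n-2}. \] Moreover, no such admissible sequence has more than $2n-1$ indices $i$ with $b_i\ne b_{i+1}$.
   Context: Positions are indexed from $1$; an occurrence of $10$ is a pair of consecutive entries $b_i=1,b_{i+1}=0$, and occurrences are ordered by starting index. *)

From mathcomp Require Import all_boot.
Set Implicit Arguments. Unset Strict Implicit. Unset Printing Implicit Defensive.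

(* Positions are 1-indexed: b_i := nth false b (i-1), for 1 <= i <= size b. *)
Definition bit (b : seq bool) (i : nat) : bool := nth false b i.-1.

Definition occ10 (b : seq bool) : seq nat :=
  [seq i <- iota 1 (size b).-1 | bit b i && ~~ bit b i.+1].

Definition changes (b : seq bool) : nat :=
  count (fun i => bit b i != bit b i.+1) (iota 1 (size b).-1).

Definition admissibleb (s : nat) (b : seq bool) : bool :=
  all (fun j => (s + 2) * j + 1 <= nth 0 (occ10 b) j.-1)
      (iota 1 (size (occ10 b))).

From mathcomp Require Import all_boot zify.
Set Implicit Arguments. Unset Strict Implicit. Unset Printing Implicit Defensive.

(* Write c = diffs b for the word of changes of b (c_i = 1 iff b_i <> b_(i+1)).
   Reading b from left to right, the occurrences of 10 are every other change,
   so up to any position T their number is (#changes up to T + b_1)/2.  Hence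
   the j-th occurrence of 10 lies beyond (s+2)j iff fewer than j occurrences lie
   at or before (s+2)j, and an admissible word of length (s+2)n+1 has fewer
   than n occurrences, i.e. at most 2n-1 changes (the final claim).

   When there are exactly 2n-1 changes, b_1 must be 0, and b is admissible iff
   its change word c, of length (s+2)n with 2n-1 ones, is "prefix bounded":
   each prefix of length (s+2)j has fewer than 2j ones.  Since b <-> c is a
   bijection on words starting with 0, it remains to count prefix bounded words.

   This is a cycle lemma: among the n rotations of c by multiples of s+2,
   exactly one is prefix bounded (it starts at the last maximum of a suitable
   height function).  Double counting rotations gives
   n * N = #{words of length (s+2)n with 2n-1 ones} = C((s+2)n, 2n-1),
   and the second closed form follows from Pascal's rule. *)

Definition change_at (b : seq bool) (i : nat) : bool := bit b i != bit b i.+1.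
Definition descent_at (b : seq bool) (i : nat) : bool := bit b i && ~~ bit b i.+1.

Lemma iota1S t : iota 1 t.+1 = rcons (iota 1 t) t.+1.
Proof. by rewrite -cats1 -(addn1 t) iotaD add1n addn1. Qed.

(* Descents are every other change: among positions 1..t, their number is
   determined by the number of changes and b_1, and b_(t+1) is b_1 flipped
   once per change. *)
Lemma descents_prefix b t :
  count (descent_at b) (iota 1 t) = (count (change_at b) (iota 1 t) + bit b 1)./2
  /\ bit b t.+1 = bit b 1 (+) odd (count (change_at b) (iota 1 t)).
Proof.
elim: t => [|t [IHd IHb]]; first by case: (bit b 1).
rewrite iota1S -!cats1 !count_cat /= !addn0 IHd /descent_at /change_at IHb.
set c := count _ _; rewrite !halfD !oddD.
case: (bit b t.+2) (bit b 1) (odd c) => [] [] [] /=; split; lia.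
Qed.

Lemma count_iota1_le (P : pred nat) T K :
  count (fun i => P i && (i <= T)) (iota 1 K) = count P (iota 1 (minn T K)).
Proof.
elim: K => [|K IH]; first by rewrite minn0.
rewrite !iota1S -cats1 count_cat IH /=.
case: (leqP K.+1 T) => [lt_KT | le_TK].
  by rewrite andbT (minn_idPr (ltnW lt_KT)) iota1S -cats1 count_cat /= addn0.
by rewrite ltnS in le_TK; rewrite andbF addn0 (minn_idPl le_TK) addn0.
Qed.

Lemma occ10_prefix b T :
  count (fun i => i <= T) (occ10 b) =
  (count (change_at b) (iota 1 (minn T (size b).-1)) + bit b 1)./2.
Proof.
rewrite /occ10 count_filter.
under eq_count => i do rewrite /= andbC.
by rewrite count_iota1_le; case: (descents_prefix b (minn T (size b).-1)).
Qed.

Lemma size_occ10 b : size (occ10 b) = (changes b + bit b 1)./2.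
Proof.
rewrite -count_predT -(@eq_in_count _ (fun i => i <= (size b).-1)).
  by rewrite occ10_prefix minnn.
by move=> i; rewrite mem_filter mem_iota => /and3P [_ _ h] /=; lia.
Qed.

Lemma sorted_nth_gtE (l : seq nat) T j : sorted ltn l -> j < size l ->
  (T < nth 0 l j) = (count (fun x => x <= T) l <= j).
Proof.
elim: l j => [|x l IH] j //= sorted_xl lt_j.
have x_lt_l : all (ltn x) l := order_path_min (@ltn_trans) sorted_xl.
have above_x : T < x -> count (fun y => y <= T) l = 0.
  move=> lt_Tx; apply/eqP; rewrite -leqn0 leqNgt -has_count.
  by apply/hasPn => y /(allP x_lt_l) lt_xy; rewrite -ltnNge (ltn_trans lt_Tx).
case: (ltnP T x) => [lt_Tx | le_xT]; case: j lt_j => [|j] lt_j /=.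
- by rewrite lt_Tx above_x.
- rewrite above_x // (ltn_trans lt_Tx) //.
  exact: allP x_lt_l _ (mem_nth 0 lt_j).
- by rewrite ltnNge le_xT.
- by rewrite add1n ltnS IH // (path_sorted sorted_xl).
Qed.

Lemma admissibleE s b : admissibleb s b =
  all (fun j => count (fun i => i <= (s + 2) * j) (occ10 b) < j)
      (iota 1 (size (occ10 b))).
Proof.
apply: eq_in_all => -[|j]; rewrite mem_iota // => /andP [_ lt_j].
rewrite /= addn1 sorted_nth_gtE //.
by apply: sorted_filter; [exact: ltn_trans | exact: iota_ltn_sorted].
Qed.

(* An admissible word of length (s+2)n+1 has fewer than n occurrences of 10,
   since an n-th one would have to start at the last position. *)
Lemma size_occ10_admissible s n b : 0 < n -> size b = (s + 2) * n + 1 ->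
  admissibleb s b -> size (occ10 b) < n.
Proof.
move=> n_gt0 size_b adm; rewrite ltnNge; apply/negP => le_n_occ.
have /(allP adm) : n \in iota 1 (size (occ10 b)) by rewrite mem_iota n_gt0 add1n ltnS.
have : nth 0 (occ10 b) n.-1 \in occ10 b by apply: mem_nth; rewrite prednK.
by rewrite mem_filter mem_iota size_b => /and3P [_ _]; lia.
Qed.

Lemma changes_admissible s n b : 0 < n -> size b = (s + 2) * n + 1 ->
  admissibleb s b -> changes b < 2 * n.
Proof.
move=> n_gt0 size_b adm; have := size_occ10_admissible n_gt0 size_b adm.
by rewrite size_occ10 ltn_half_double; lia.
Qed.

(* The change word of b, and its inverse [integrate] (reconstructing the word
   starting with 0 whose changes are given by c). *)
Definition diffs (b : seq bool) : seq bool :=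
  [seq change_at b i | i <- iota 1 (size b).-1].

Definition integrate (c : seq bool) : seq bool :=
  mkseq (fun p => odd (count id (take p c))) (size c).+1.

Lemma size_diffs b : size (diffs b) = (size b).-1.
Proof. by rewrite size_map size_iota. Qed.

Lemma changes_diffs b : changes b = count id (diffs b).
Proof. by rewrite count_map. Qed.

Lemma count_take_diffs b p :
  count id (take p (diffs b)) = count (change_at b) (iota 1 (minn p (size b).-1)).
Proof. by rewrite -map_take take_iota count_map. Qed.

Lemma size_integrate c : size (integrate c) = (size c).+1.
Proof. by rewrite size_mkseq. Qed.

Lemma bit_integrate c p : p <= size c ->
  bit (integrate c) p.+1 = odd (count id (take p c)).
Proof. by move=> le_p; rewrite /bit /= nth_mkseq. Qed.

Lemma integrateK c : diffs (integrate c) = c.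
Proof.
apply: (@eq_from_nth _ false) => [|i]; rewrite size_diffs size_integrate // => lt_i.
rewrite (nth_map 0) ?size_iota ?size_integrate // nth_iota // add1n /change_at.
rewrite !bit_integrate ?(ltnW lt_i) // (take_nth false lt_i) -cats1 count_cat oddD.
by case: (odd _); case: (nth _ _ _).
Qed.

Lemma diffsK b : 0 < size b -> bit b 1 = false -> integrate (diffs b) = b.
Proof.
move=> size_gt0 b1; apply: (@eq_from_nth _ false) => [|i];
  rewrite size_integrate size_diffs prednK // => lt_i.
rewrite nth_mkseq ?size_diffs ?prednK // count_take_diffs (minn_idPl _); last first.
  by rewrite -ltnS prednK.
by case: (descents_prefix b i) => _; rewrite b1 /bit /= => <-.
Qed.

Definition prefix_bounded (d a n : nat) (c : seq bool) : bool :=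
  all (fun j => count id (take (d * j) c) < a * j) (iota 1 n).

(* An admissible word with the maximal number 2n-1 of changes starts with 0:
   otherwise it would have n occurrences of 10. *)
Lemma extremal_first_bit s n b : 0 < n -> size b = (s + 2) * n + 1 ->
  admissibleb s b -> changes b = 2 * n - 1 -> bit b 1 = false.
Proof.
move=> n_gt0 size_b adm chg; have := size_occ10_admissible n_gt0 size_b adm.
rewrite size_occ10 chg; case: (bit b 1) => //.
by rewrite (_ : 2 * n - 1 + true = (n.*2)) ?doubleK ?ltnn //; lia.
Qed.

(* For words starting with 0 with 2n-1 changes, admissibility is prefix
   boundedness of the change word (the condition for j = n being automatic). *)
Lemma admissible_extremalE s n b : 0 < n -> size b = (s + 2) * n + 1 ->
  changes b = 2 * n - 1 -> bit b 1 = false ->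
  admissibleb s b = prefix_bounded (s + 2) 2 n (diffs b).
Proof.
move=> n_gt0 size_b chg b1.
have size_occ : size (occ10 b) = n.-1.
  by rewrite size_occ10 chg b1 addn0 (_ : 2 * n - 1 = true + (n.-1).*2) ?half_bit_double //; lia.
have prefix_lenE j : j <= n -> minn ((s + 2) * j) (size b).-1 = (s + 2) * j.
  by move=> le_jn; apply/minn_idPl; rewrite size_b addn1 leq_mul2l le_jn orbT.
have last_ok : count id (take ((s + 2) * n) (diffs b)) < 2 * n.
  have size_pred : (s + 2) * n = (size b).-1 by rewrite size_b addn1.
  by rewrite count_take_diffs prefix_lenE // size_pred -/(changes b) chg; lia.
rewrite admissibleE /prefix_bounded size_occ.
have -> : iota 1 n = rcons (iota 1 n.-1) n by case: (n) n_gt0 => // m _; rewrite iota1S.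
rewrite all_rcons last_ok /=.
apply: eq_in_all => j; rewrite mem_iota => /andP [_ lt_j].
rewrite occ10_prefix count_take_diffs !prefix_lenE ?b1 ?addn0 ?ltn_half_double -?muln2 //; lia.
Qed.

(* P counts ones along an infinite periodic word: going once
   around the period of n blocks adds a*n - 1.  A start k is good when every
   stretch of j blocks, 1 <= j <= n, after k gains fewer than a*j. *)
Section CycleLemma.

Variables (P : nat -> nat) (a n : nat).
Hypothesis P_period : forall r, r < n -> P (n + r) + 1 = P r + a * n.

Definition good_start (k : nat) : bool :=
  all (fun j => P (k + j) < P k + a * j) (iota 1 n).

(* Two good starts k1 < k2 are impossible: the stretches k1 -> k2 and
   k2 -> n + k1 together gain a*n - 1 but would each be too short. *)
Lemma good_start_unique k1 k2 : k1 < n -> k2 < n ->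
  good_start k1 -> good_start k2 -> k1 = k2.
Proof.
wlog lt12 : k1 k2 / k1 < k2.
  move=> wlog_lt lt1 lt2 g1 g2; case: (ltngtP k1 k2) => // [lt12 | lt21].
  - exact: wlog_lt.
  - by apply/esym/wlog_lt.
move=> lt1 lt2 /allP g1 /allP g2; exfalso.
have := g1 (k2 - k1); rewrite mem_iota subnKC ?(ltnW lt12) //.
have := g2 (n + k1 - k2); rewrite mem_iota (_ : k2 + (n + k1 - k2) = n + k1); last by lia.
have := P_period lt1.
nia.
Qed.

Let height (t : nat) : nat := P t + a * (n - t).

Lemma last_maximum_good k : k < n ->
  (forall t, t < n -> height t <= height k /\ (k < t -> height t < height k)) ->
  good_start k.
Proof.
rewrite /height => lt_k top; apply/allP => j; rewrite mem_iota => /andP [j_ge1 j_le].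
change nat in j.
have split_mul x y z : y <= x -> z = x - y -> a * x = a * z + a * y.
  by move=> le_yx ->; rewrite -mulnDr subnK.
case: (ltnP (k + j) n) => [lt_kj | ge_kj].
  have [_ /(_ _) lt_height] := top _ lt_kj.
  rewrite (split_mul (n - k) j (n - (k + j))) in lt_height; lia.
set r := k + j - n; have lt_r : r < n by lia.
have [le_height _] := top _ lt_r; have := P_period lt_r.
rewrite (_ : n + r = k + j) ?(split_mul n r (n - r)) ?(split_mul j r (n - k)) //; lia.
Qed.

(* A last maximum of the height exists: maximise n * height t + t, which
   orders by height first and position second. *)
Lemma exists_last_maximum : 0 < n -> exists2 k, k < n &
  forall t, t < n -> height t <= height k /\ (k < t -> height t < height k).
Proof.
move=> n_gt0.
case: (@arg_maxnP _ (Ordinal n_gt0) predT (fun t : 'I_n => n * height t + t)) => //.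
move=> k _ top; exists k => // t lt_t.
have := top (Ordinal lt_t) isT; have := ltn_ord k; rewrite /=.
by move: (height t) (height k) (val k) => ht hk k0 lt_k0 le_t; split; nia.
Qed.

Theorem cycle_lemma : 0 < n -> #|[pred k : 'I_n | good_start k]| = 1.
Proof.
move=> n_gt0; have [k lt_k top] := exists_last_maximum n_gt0.
apply: (@eq_card1 _ (Ordinal lt_k)) => k'; rewrite unfold_in /=.
have good_k := last_maximum_good lt_k top.
apply/idP/eqP => [good_k' | ->] //.
exact/val_inj/(good_start_unique (ltn_ord k') lt_k).
Qed.

End CycleLemma.

Definition periodic_ones (d : nat) (c : seq bool) (t : nat) : nat :=
  count (fun i => nth false c (i %% size c)) (iota 0 (d * t)).

Lemma count_take_periodic (c : seq bool) T : T <= size c ->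
  count id (take T c) = count (fun i => nth false c (i %% size c)) (iota 0 T).
Proof.
move=> le_T; have -> : take T c = map (nth false c) (iota 0 T).
  apply: (@eq_from_nth _ false) => [|i]; rewrite size_takel ?size_map ?size_iota // => lt_i.
  by rewrite nth_take // (nth_map 0) ?size_iota // nth_iota.
rewrite count_map; apply: eq_in_count => i; rewrite mem_iota => /andP [_ lt_i].
by rewrite /= modn_small // (leq_trans lt_i).
Qed.

Lemma nth_rot (c : seq bool) x i : x <= size c -> i < size c ->
  nth false (rot x c) i = nth false c ((x + i) %% size c).
Proof.
move=> le_x lt_i; rewrite /rot nth_cat size_drop nth_drop.
case: ltnP => [lt_i_x | le_x_i]; first by rewrite modn_small //; lia.
rewrite nth_take; last by lia.
rewrite (_ : x + i = i - (size c - x) + size c); last by lia.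
by rewrite modnDr modn_small //; lia.
Qed.

Section PeriodicOnes.

Variables (d n : nat) (c : seq bool).
Hypotheses (d_gt0 : 0 < d) (n_gt0 : 0 < n) (size_c : size c = d * n).

Lemma periodic_ones_shift k j : k <= n ->
  periodic_ones d c (k + j) = periodic_ones d c k + periodic_ones d (rot (d * k) c) j.
Proof.
move=> le_kn; have size_gt0 : 0 < size c by rewrite size_c muln_gt0 d_gt0.
have le_dk : d * k <= size c by rewrite size_c leq_mul2l le_kn orbT.
rewrite /periodic_ones mulnDr iotaD count_cat add0n; congr (_ + _).
rewrite -[X in iota X]addn0 iotaDl count_map size_rot; apply: eq_count => i /=.
by rewrite nth_rot ?ltn_pmod // modnDmr.
Qed.

Lemma periodic_ones_full : periodic_ones d c n = count id c.
Proof. by rewrite /periodic_ones -size_c -count_take_periodic // take_size. Qed.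

Lemma periodic_ones_period a r : (count id c).+1 = a * n ->
  periodic_ones d c (n + r) + 1 = periodic_ones d c r + a * n.
Proof.
move=> count_c; rewrite periodic_ones_shift // -size_c rot_size periodic_ones_full.
by rewrite -count_c addn1 addnS addnC.
Qed.

Lemma prefix_bounded_rot a k : k <= n ->
  prefix_bounded d a n (rot (d * k) c) = good_start (periodic_ones d c) a n k.
Proof.
move=> le_kn; apply: eq_in_all => j; rewrite mem_iota add1n ltnS => /andP [_ le_jn].
rewrite periodic_ones_shift // ltn_add2l count_take_periodic //.
by rewrite size_rot size_c leq_mul2l le_jn orbT.
Qed.

End PeriodicOnes.

Lemma card_sum_indicator (T : finType) (A : pred T) : #|A| = \sum_(x : T) (A x : nat).
Proof. by rewrite -sum1_card big_mkcond; apply: eq_bigr => x _; rewrite unfold_in; case: (A x). Qed.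

Lemma count_rot k (c : seq bool) : count id (rot k c) = count id c.
Proof. by apply/permP; rewrite perm_rot. Qed.

(* Double counting pairs (word, good rotation): each word with a*n - 1 ones
   has exactly one prefix bounded rotation by a multiple of d, and rotating by
   k blocks permutes the words with a*n - 1 ones. *)
Theorem card_bounded_words d a n K : 0 < d -> 0 < n -> K.+1 = a * n ->
  n * #|[pred c : (d * n).-tuple bool | (count id c == K) && prefix_bounded d a n c]|
  = #|[pred c : (d * n).-tuple bool | count id c == K]|.
Proof.
move=> d_gt0 n_gt0 aK; set m := d * n.
pose rot_good (c : m.-tuple bool) (k : 'I_n) := prefix_bounded d a n (rot (d * k) c).
have rot_sum (c : m.-tuple bool) : count id c == K ->
    \sum_(k < n) (rot_good c k : nat) = 1.
  move=> /eqP count_c; have size_c : size c = d * n by rewrite size_tuple.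
  have period r : r < n -> periodic_ones d c (n + r) + 1 = periodic_ones d c r + a * n.
    by move=> _; apply: periodic_ones_period; rewrite ?count_c.
  rewrite -(cycle_lemma period n_gt0) card_sum_indicator; apply: eq_bigr => k _.
  by rewrite /rot_good prefix_bounded_rot // ltnW.
have rot_invariant (k : 'I_n) :
    \sum_(c : m.-tuple bool) ((count id c == K) && rot_good c k : nat) =
    #|[pred c : m.-tuple bool | (count id c == K) && prefix_bounded d a n c]|.
  rewrite card_sum_indicator [RHS](reindex_inj (h := @rot_tuple m (d * k) bool)) /=.
    by apply: eq_bigr => c _; rewrite count_rot.
  by move=> c1 c2 /(congr1 val) /rot_inj; apply: val_inj.
rewrite [RHS]card_sum_indicator.
have -> : n * #|[pred c : m.-tuple bool | (count id c == K) && prefix_bounded d a n c]| =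
    \sum_(k < n) \sum_(c : m.-tuple bool) ((count id c == K) && rot_good c k : nat).
  by rewrite (eq_bigr _ (fun k _ => rot_invariant k)) big_const_ord iter_addn_0 mulnC.
rewrite exchange_big /=.
apply: eq_bigr => c _ /=.
case: eqP => [/eqP count_c | _]; last by rewrite big1.
by rewrite -[RHS]/1 -(rot_sum c count_c).
Qed.

Lemma card_support m (c : m.-tuple bool) : #|[set i : 'I_m | tnth c i]| = count id c.
Proof.
rewrite -sum1_count big_tuple cardsE -sum1_card.
by apply: eq_bigl => i; rewrite !unfold_in.
Qed.

Lemma card_count_words m K :
  #|[pred c : m.-tuple bool | count id c == K]| = 'C(m, K).
Proof.
rewrite -[m in 'C(m, K)]card_ord -card_draws.
pose support (c : m.-tuple bool) : {set 'I_m} := [set i | tnth c i].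
have support_inv : cancel (fun A : {set 'I_m} => [tuple i \in A | i < m]) support.
  by move=> A; apply/setP => i; rewrite inE tnth_mktuple.
have support_inj : injective support.
  move=> c1 c2 eq_c; apply: eq_from_tnth => i.
  by have /setP/(_ i) := eq_c; rewrite !inE.
rewrite -(card_image support_inj); apply: eq_card => A; rewrite inE.
apply/imageP/idP => [[c count_c ->] | size_A].
  by rewrite card_support.
exists [tuple i \in A | i < m]; last by rewrite support_inv.
have := card_support [tuple i \in A | i < m]; rewrite -/(support _) support_inv => count_A.
by rewrite unfold_in /= -count_A.
Qed.

Lemma extremal_admissibleE s n b : 0 < n -> size b = (s + 2) * n + 1 ->
  admissibleb s b && (changes b == 2 * n - 1) =
  [&& bit b 1 == false, count id (diffs b) == 2 * n - 1
    & prefix_bounded (s + 2) 2 n (diffs b)].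
Proof.
move=> n_gt0 size_b; rewrite -changes_diffs.
apply/andP/and3P => [[adm /eqP chg] | [/eqP b1 /eqP chg bounded]].
  have b1 := extremal_first_bit n_gt0 size_b adm chg.
  by rewrite b1 chg -(admissible_extremalE n_gt0 size_b chg b1).
by rewrite (admissible_extremalE n_gt0 size_b chg b1) chg.
Qed.

Lemma integrate_tupleP m (c : m.-tuple bool) : size (integrate c) == m + 1.
Proof. by rewrite size_integrate size_tuple addn1. Qed.

Definition integrate_tuple m (c : m.-tuple bool) : (m + 1).-tuple bool :=
  Tuple (integrate_tupleP c).

Lemma diffs_tupleP m (b : (m + 1).-tuple bool) : size (diffs b) == m.
Proof. by rewrite size_diffs size_tuple addn1. Qed.

(* The change word is a bijection from the admissible words with 2n-1 changes
   onto the prefix bounded words with 2n-1 ones. *)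
Lemma card_extremal_admissible s n : 0 < n ->
  #|[pred b : ((s + 2) * n + 1).-tuple bool |
      admissibleb s b && (changes b == 2 * n - 1)]|
  = #|[pred c : ((s + 2) * n).-tuple bool |
      (count id c == 2 * n - 1) && prefix_bounded (s + 2) 2 n c]|.
Proof.
move=> n_gt0.
have integrate_inj m : injective (@integrate_tuple m).
  by move=> c1 c2 /(congr1 (diffs \o val)); rewrite /= !integrateK => /val_inj.
rewrite -[RHS](card_imset _ (integrate_inj _)); apply: eq_card => b.
rewrite unfold_in /= (extremal_admissibleE n_gt0 (size_tuple b)).
apply/and3P/imsetP => [[/eqP b1 count_b bounded] | [c]].
  exists (Tuple (diffs_tupleP b)); first by rewrite unfold_in /= count_b.
  by apply: val_inj; rewrite /= diffsK ?b1 // size_tuple addn1.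
rewrite unfold_in /= => /andP [count_c bounded] ->.
by rewrite /= integrateK bit_integrate // take0.
Qed.

(* The second closed form, from n N = C(m, 2n-1), Pascal's rule and
   (2n-1) C(m-1, 2n-1) = (sn+1) C(m-1, 2n-2), where m = (s+2)n. *)
Lemma extremal_binomial_identity s n N : 0 < n ->
  n * N = 'C((s + 2) * n, 2 * n - 1) ->
  N + s * 'C((s + 2) * n - 1, 2 * n - 2) = 2 * 'C((s + 2) * n - 1, 2 * n - 1).
Proof.
move=> n_gt0 nN.
have pascal := binS ((s + 2) * n - 1) (2 * n - 2).
have absorb := mul_bin_left ((s + 2) * n - 1) (2 * n - 2).
rewrite (_ : (2 * n - 2).+1 = 2 * n - 1) in pascal absorb; last by lia.
rewrite (_ : ((s + 2) * n - 1).+1 = (s + 2) * n) in pascal; last by lia.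
rewrite (_ : (s + 2) * n - 1 - (2 * n - 2) = s * n + 1) in absorb; last by lia.
apply/eqP; rewrite -(eqn_pmul2l n_gt0) mulnDr nN pascal; apply/eqP.
move: absorb; set A := 'C(_, 2 * n - 2); set B := 'C(_, 2 * n - 1).
move: A B => A B absorb; clear nN pascal.
nia.
Qed.

Theorem mainTheorem7 (n s : nat) (hn : 1 <= n) :
  let L := (s + 2) * n + 1 in
  let N := #|[pred t : L.-tuple bool |
                admissibleb s t && (changes t == 2 * n - 1)]| in
  (n * N = 'C((s + 2) * n, 2 * n - 1)
   /\ N + s * 'C((s + 2) * n - 1, 2 * n - 2)
        = 2 * 'C((s + 2) * n - 1, 2 * n - 1))
  /\ (forall b : seq bool, size b = L -> admissibleb s b ->
        changes b <= 2 * n - 1).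
Proof.
move=> L N.
have count_N : n * N = 'C((s + 2) * n, 2 * n - 1).
  by rewrite /N card_extremal_admissible // card_bounded_words ?card_count_words ?addn2 //; lia.
split; first by split; last exact: extremal_binomial_identity.
move=> b size_b adm; have := changes_admissible hn size_b adm; lia.
Qed.
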